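(* Consider FedProx, as described in the context, and a round $t$ whose step size satisfies $\gamma_t\le1/\alpha$. Assume that the bounded variance, bounded stochastic gradient norm and $L$-smoothness assumptions hold. Then for every client $i$ and every $k\in\{0,\dots,E\}$, $$\mathbb{E}\|\mathbf{w}^i_{t,k}-\overline{\mathbf{w}}_{t,0}\|^2\le\gamma_t^2E^2G^2.$$
   Context: Setting: there are $C$ clients with weights $p_i\ge0$ satisfying $\sum_ip_i=1$, local objectives $F_i:\mathbb{R}^D\to\mathbb{R}$, and global objective $F=\sum_ip_iF_i$. FedProx with $\alpha>0$, $E\ge1$ local steps and step sizes $\gamma_t$, with all clients participating: in round $t$, $\mathbf{w}^i_{t,0}=\overline{\mathbf{w}}_{t,0}$ and, for $k=0,\dots,E-1$, $$\mathbf{w}^i_{t,k+1}=(1-\alpha\gamma_t)\mathbf{w}^i_{t,k}+\alpha\gamma_t\overline{\mathbf{w}}_{t,0}-\gamma_tg_i(\mathbf{w}^i_{t,k}),$$ with stochastic gradients $g_i$ of $F_i$ sampled independently given the past. Also $\overline{\mathbf{w}}_{t,k}=\sum_ip_i\mathbf{w}^i_{t,k}$ and $\overline{\mathbf{w}}_{t+1,0}=\overline{\mathbf{w}}_{t,E}$. Assumptions: - Unbiasedness: $\mathbb{E}\,g_i(\mathbf{w}^i_{t,k})=\nabla F_i(\mathbf{w}^i_{t,k})$. - Variance: $\mathbb{E}\|g_i(\mathbf{w}^i_{t,k})-\nabla F_i(\mathbf{w}^i_{t,k})\|^2\le\sigma^2$. - Bounded second moment: $\mathbb{E}\|g_i(\mathbf{w}^i_{t,k})\|^2\le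 G^2$ for all $i,t,k$. - Smoothness: each $\nabla F_i$ is $L$-Lipschitz. $\mathbb{E}$ is total expectation. *)

From HB Require Import structures.
From mathcomp Require Import all_boot all_order all_algebra.
From mathcomp Require Import all_classical all_reals all_analysis.
Set Implicit Arguments. Unset Strict Implicit. Unset Printing Implicit Defensive.
Import Order.TTheory GRing.Theory Num.Theory.
Local Open Scope ring_scope.

Definition sqnorm {R : realType} {D : nat} (v : 'rV[R]_D) : R :=
  \sum_(j < D) (v 0 j) ^+ 2.

Definition dotp {R : realType} {D : nat} (u v : 'rV[R]_D) : R :=
  \sum_(j < D) u 0 j * v 0 j.

Definition wavg {R : realType} {C D : nat} {Omega : Type}
  (p : 'I_C -> R) (w : 'I_C -> nat -> nat -> Omega -> 'rV[R]_D)
  (t k : nat) (om : Omega) : 'rV[R]_D :=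
  \sum_(i < C) p i *: w i t k om.

From HB Require Import structures.
From mathcomp Require Import all_boot all_order all_algebra.
From mathcomp Require Import all_classical all_reals all_analysis.
From mathcomp Require Import measurable_realfun ring lra.
Set Implicit Arguments. Unset Strict Implicit. Unset Printing Implicit Defensive.
Import Order.TTheory GRing.Theory Num.Theory.
Local Open Scope ring_scope.

(* The drift u_k = w^i_{t,k} - \bar w_{t,0} satisfies u_0 = 0 and
   u_{k+1} = (1 - αγ) u_k - γ g_k, hence u_k = -γ Σ_{j<k} (1 - αγ)^{k-1-j} g_j.
   Since γ ≤ 1/α the weights (1 - αγ)^m lie in [0, 1], so Cauchy-Schwarz gives
   ‖u_k‖² ≤ γ² k Σ_{j<k} ‖g_j‖², and the second-moment bound yields
   E‖u_k‖² ≤ γ² k² G² ≤ γ² E² G². *)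

Lemma sqr_sum_le (R : realFieldType) (n : nat) (x : 'I_n -> R) :
  (\sum_(j < n) x j) ^+ 2 <= n%:R * \sum_(j < n) x j ^+ 2.
Proof.
set S1 := \sum_(j < n) x j; set S2 := \sum_(j < n) x j ^+ 2.
have row_sum i : \sum_(j < n) (x i - x j) ^+ 2 = n%:R * x i ^+ 2 + S2 - 2 * x i * S1.
  have sqrB j : (x i - x j) ^+ 2 = x i ^+ 2 + x j ^+ 2 - 2 * x i * x j by ring.
  under eq_bigr do rewrite sqrB.
  by rewrite sumrB big_split /= sumr_const card_ord mulr_sumr [n%:R * _]mulr_natl.
have double_sum : \sum_(i < n) \sum_(j < n) (x i - x j) ^+ 2 = 2 * (n%:R * S2 - S1 ^+ 2).
  under eq_bigr do rewrite row_sum.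
  rewrite sumrB big_split /= sumr_const card_ord -mulr_sumr -mulr_suml.
  by rewrite -mulr_natl -mulr_sumr -/S1 -/S2; ring.
have : 0 <= \sum_(i < n) \sum_(j < n) (x i - x j) ^+ 2.
  by apply: sumr_ge0 => i _; apply: sumr_ge0 => j _; exact: sqr_ge0.
rewrite double_sum; lra.
Qed.

Section sqnorm.
Variables (R : realType) (D : nat).
Implicit Types v : 'rV[R]_D.

Lemma sqnorm_ge0 v : 0 <= sqnorm v.
Proof. by apply: sumr_ge0 => l _; exact: sqr_ge0. Qed.

Lemma sqnormZ (a : R) v : sqnorm (a *: v) = a ^+ 2 * sqnorm v.
Proof. by rewrite /sqnorm mulr_sumr; apply: eq_bigr => l _; rewrite mxE exprMn. Qed.

Lemma sqnorm_sum_le n (v : 'I_n -> 'rV[R]_D) :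
  sqnorm (\sum_(j < n) v j) <= n%:R * \sum_(j < n) sqnorm (v j).
Proof.
rewrite /sqnorm exchange_big mulr_sumr /=; apply: ler_sum => l _.
by rewrite summxE; exact: sqr_sum_le.
Qed.

Lemma sqnorm_contraction_sum_le n (c : 'I_n -> R) (v : 'I_n -> 'rV[R]_D) :
  (forall j, `|c j| <= 1) ->
  sqnorm (\sum_(j < n) c j *: v j) <= n%:R * \sum_(j < n) sqnorm (v j).
Proof.
move=> c_le1; apply: le_trans (sqnorm_sum_le (fun j => c j *: v j)) _.
rewrite ler_wpM2l // ; apply: ler_sum => j _; rewrite sqnormZ.
rewrite -[leRHS]mul1r ler_wpM2r ?sqnorm_ge0 // -real_normK ?num_real //.
by rewrite exprn_ile1.
Qed.

End sqnorm.

Lemma norm_prox_weightX_le1 (R : realFieldType) (alpha gamma : R) (m : nat) :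
  0 < alpha -> 0 < gamma -> gamma <= 1 / alpha -> `|(1 - alpha * gamma) ^+ m| <= 1.
Proof.
move=> alpha_gt0 gamma_gt0 gamma_le.
have ag_gt0 : 0 < alpha * gamma by rewrite mulr_gt0.
have ag_le1 : alpha * gamma <= 1 by move: gamma_le; rewrite ler_pdivlMr // mulrC.
by rewrite normrX exprn_ile1 // ger0_norm; lra.
Qed.

Lemma unroll_linear_recursion (R : pzRingType) (V : lmodType R) (a : R)
    (u v : nat -> V) (n : nat) :
  u 0%N = 0 -> (forall k, (k < n)%N -> u k.+1 = a *: u k + v k) ->
  forall k, (k <= n)%N -> u k = \sum_(j < k) a ^+ (k - j.+1) *: v j.
Proof.
move=> u0 uS; elim=> [|k IH] kn; first by rewrite big_ord0.
rewrite uS // IH 1?ltnW // big_ord_recr /= subnn expr0 scale1r scaler_sumr.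
congr (_ + _); apply: eq_bigr => j _.
by rewrite scalerA -exprS subSS subnSK.
Qed.

Section random_vectors.
Context d (T : measurableType d) (R : realType) (D : nat).

(* 'rV carries no σ-algebra; a random row vector is measurable coordinatewise. *)
Definition measurable_rV (f : T -> 'rV[R]_D) :=
  forall l, measurable_fun setT (fun x => f x 0 l).

Lemma measurable_rVZ (c : R) (f : T -> 'rV[R]_D) :
  measurable_rV f -> measurable_rV (fun x => c *: f x).
Proof.
move=> mf l; under eq_fun do rewrite mxE.
by apply: measurable_funM; [exact: measurable_cst | exact: mf].
Qed.

Lemma measurable_rV_sum n (f : 'I_n -> T -> 'rV[R]_D) :
  (forall j, measurable_rV (f j)) -> measurable_rV (fun x => \sum_(j < n) f j x).
Proof.
by move=> mf l; under eq_fun do rewrite summxE; apply: measurable_sum => j; exact: mf.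
Qed.

Lemma measurable_sqnorm (f : T -> 'rV[R]_D) :
  measurable_rV f -> measurable_fun setT (fun x => sqnorm (f x)).
Proof. by move=> mf; apply: measurable_sum => l; exact: measurable_funX. Qed.

End random_vectors.

Section expectation_domination.
Local Open Scope ereal_scope.
Context d (T : measurableType d) (R : realType) (P : probability T R).

Lemma ge0_expectationZl_sum n (Y : 'I_n -> T -> R) (c : R) :
  (0 <= c)%R -> (forall j, measurable_fun setT (Y j)) -> (forall j x, 0 <= Y j x)%R ->
  'E_P[fun x => c * \sum_(j < n) Y j x]%R = c%:E * \sum_(j < n) 'E_P[Y j].
Proof.
move=> c0 mY Y0; rewrite !expectation.unlock.
under eq_integral do rewrite EFinM -sumEFin.
rewrite ge0_integralZl ?lee_fin //; last 2 first.
- by apply: emeasurable_sum => j; apply/measurable_EFinP.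
- by move=> x _; rewrite sume_ge0 // => j _; rewrite lee_fin.
rewrite ge0_integral_sum // => [j | j x _]; first exact/measurable_EFinP.
by rewrite lee_fin.
Qed.

Lemma expectation_le_sum n (X : T -> R) (Y : 'I_n -> T -> R) (c b : R) :
  (0 <= c)%R -> measurable_fun setT X -> (forall j, measurable_fun setT (Y j)) ->
  (forall x, 0 <= X x)%R -> (forall j x, 0 <= Y j x)%R ->
  (forall x, X x <= c * \sum_(j < n) Y j x)%R -> (forall j, 'E_P[Y j] <= b%:E) ->
  'E_P[X] <= (c * n%:R * b)%:E.
Proof.
move=> c0 mX mY X0 Y0 XY Yb.
have mcY : measurable_fun setT (fun x => c * \sum_(j < n) Y j x)%R.
  by apply: measurable_funM; [exact: measurable_cst | exact: measurable_sum].
have cY0 x : (0 <= c * \sum_(j < n) Y j x)%R by rewrite mulr_ge0 ?sumr_ge0.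
apply: (le_trans (expectation_le mX mcY X0 cY0 (aeW P XY))).
rewrite ge0_expectationZl_sum // -mulrA EFinM lee_wpmul2l ?lee_fin //.
apply: (@le_trans _ _ (\sum_(j < n) b%:E)); first exact: lee_sum.
by rewrite sumEFin sumr_const card_ord lee_fin mulr_natl.
Qed.

End expectation_domination.

Theorem lemma2
  (R : realType) (d : measure_display) (Omega : measurableType d)
  (P : probability Omega R) (C D : nat)
  (p : 'I_C -> R) (F : 'I_C -> 'rV[R]_D -> R) (gradF : 'I_C -> 'rV[R]_D -> 'rV[R]_D)
  (alpha : R) (nE : nat) (gamma : nat -> R) (L sigma G : R)
  (w : 'I_C -> nat -> nat -> Omega -> 'rV[R]_D)
  (g : 'I_C -> nat -> nat -> Omega -> 'rV[R]_D)
  (* client weights *)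
  (hp0 : forall i, 0 <= p i) (hp1 : \sum_(i < C) p i = 1)
  (* parameters *)
  (halpha : 0 < alpha) (hE : (1 <= nE)%N) (hgamma : forall t, 0 < gamma t)
  (* gradF i is the gradient of F i *)
  (hgrad : forall i x v, is_derive x v (F i) (dotp (gradF i x) v))
  (* L-smoothness *)
  (hL : forall i x y, sqnorm (gradF i x - gradF i y) <= L ^+ 2 * sqnorm (x - y))
  (hL0 : 0 <= L)
  (* FedProx dynamics, all clients participating *)
  (hinit : forall i t om, w i t 0%N om = wavg p w t 0%N om)
  (hstep : forall i t k om, (k < nE)%N ->
     w i t k.+1 om = (1 - alpha * gamma t) *: w i t k om
                     + (alpha * gamma t) *: wavg p w t 0%N om
                     - gamma t *: g i t k om)
  (hround : forall t om, wavg p w t.+1 0%N om = wavg p w t nE om)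
  (* stochastic gradients are random vectors *)
  (hgmeas : forall i t k (j : 'I_D), measurable_fun setT (fun om => g i t k om 0 j))
  (* bounded variance *)
  (hvar : forall i t k,
     ('E_P[fun om => sqnorm (g i t k om - gradF i (w i t k om))] <= (sigma ^+ 2)%:E)%E)
  (* bounded second moment *)
  (hG : forall i t k, ('E_P[fun om => sqnorm (g i t k om)] <= (G ^+ 2)%:E)%E)
  (t : nat) (hgt : gamma t <= 1 / alpha)
  (i : 'I_C) (k : nat) (hk : (k <= nE)%N) :
  ('E_P[fun om => sqnorm (w i t k om - wavg p w t 0%N om)]
     <= (gamma t ^+ 2 * (nE%:R) ^+ 2 * G ^+ 2)%:E)%E.
Proof.
set a := 1 - alpha * gamma t.
have a_pow_le1 m : `|a ^+ m| <= 1 by exact: norm_prox_weightX_le1.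
pose S om := \sum_(j < k) a ^+ (k - j.+1) *: g i t j om.
have drift om : w i t k om - wavg p w t 0%N om = - gamma t *: S om.
  rewrite scaler_sumr; under eq_bigr do rewrite scalerA mulrC -scalerA.
  apply: (unroll_linear_recursion (u := fun m => w i t m om - wavg p w t 0%N om)
    (v := fun m => - gamma t *: g i t m om) _ _ hk).
  - by rewrite hinit subrr.
  - by move=> m mE; rewrite hstep //; apply/rowP => l; rewrite !mxE /a; ring.
under eq_fun do rewrite drift sqnormZ sqrrN.
have mS : measurable_rV S.
  by apply: measurable_rV_sum => j; apply: measurable_rVZ; exact: hgmeas.
apply: le_trans (expectation_le_sum (n := k) (c := gamma t ^+ 2 * k%:R) (b := G ^+ 2)
  (Y := fun j om => sqnorm (g i t j om)) _ _ _ _ _ _ (fun j => hG i t j)) _.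
- by rewrite mulr_ge0 ?sqr_ge0.
- by apply: measurable_funM; [exact: measurable_cst | exact: measurable_sqnorm mS].
- by move=> j; apply: measurable_sqnorm; exact: hgmeas.
- by move=> om; rewrite mulr_ge0 ?sqr_ge0 ?sqnorm_ge0.
- by move=> j om; exact: sqnorm_ge0.
- move=> om; rewrite -mulrA ler_wpM2l ?sqr_ge0 //.
  exact: sqnorm_contraction_sum_le.
have k_le_E : (k%:R : R) ^+ 2 <= nE%:R ^+ 2 by rewrite -!natrX ler_nat leq_sqr.
have := mulr_ge0 (sqr_ge0 (gamma t)) (sqr_ge0 G).
rewrite lee_fin; nra.
Qed.
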